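(* Let $n\ge1$, $m>1$, $a\in\mathbb{R}^n$, $d\in\mathbb{R}^m$ with $\|d\|\ge\|a\|$, and $S_{\le0}=\{(x,y)\in\mathbb{R}^{n+m}:\|x\|\le\|y\|,\ a^\mathsf{T} x+d^\mathsf{T} y\le0\}$. Let $(\bar x,\bar y)\notin S_{\le0}$ satisfy $a^\mathsf{T}\bar x+d^\mathsf{T}\bar y\le0$ and let $\lambda=\bar x/\|\bar x\|$. Define $G(\lambda)=\{\beta\in\mathbb{R}^m:\|\beta\|=1,\ a^\mathsf{T}\lambda+d^\mathsf{T}\beta\le0\}$ and $C_{G(\lambda)}=\{(x,y):-\lambda^\mathsf{T} x+\beta^\mathsf{T} y\le0\ \forall\beta\in G(\lambda)\}$. Then $C_{G(\lambda)}$ is maximal $S_{\le0}$-free and contains $(\bar x,\bar y)$ in its interior.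
   Context: $\|\cdot\|$ is the Euclidean norm. A convex set $C$ is $S$-free if $\operatorname{int}(C)\cap S=\emptyset$, and maximal $S$-free if it is $S$-free and no $S$-free convex set strictly contains it. (Note $(\bar x,\bar y)\notin S_{\le0}$ together with the linear inequality means $\|\bar x\|>\|\bar y\|$.) *)

From HB Require Import structures.
From mathcomp Require Import all_boot all_order all_algebra.
From mathcomp Require Import all_classical all_reals all_analysis.
Set Implicit Arguments. Unset Strict Implicit. Unset Printing Implicit Defensive.
Import Order.TTheory GRing.Theory Num.Theory.
Import numFieldNormedType.Exports.
Local Open Scope ring_scope.
Local Open Scope classical_set_scope.

Definition dotv (R : realType) (n : nat) (u v : 'rV[R]_n) : R :=
  \sum_(i < n) u ord0 i * v ord0 i.

Definition enorm (R : realType) (n : nat) (u : 'rV[R]_n) : R :=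
  Num.sqrt (dotv u u).

Definition convex_set (R : realType) (k : nat) (C : set 'rV[R]_k) : Prop :=
  forall x y (t : R), C x -> C y -> 0 <= t -> t <= 1 ->
    C (t *: x + (1 - t) *: y).

Definition S_free (R : realType) (k : nat) (S C : set 'rV[R]_k) : Prop :=
  convex_set C /\ (@interior 'rV[R]_k C) `&` S = set0.

Definition maximal_S_free (R : realType) (k : nat) (S C : set 'rV[R]_k) : Prop :=
  S_free S C /\ (forall C', S_free S C' -> C `<=` C' -> C' = C).

From Pilot Require Import Defs.
From HB Require Import structures.
From mathcomp Require Import all_boot all_order all_algebra.
From mathcomp Require Import all_classical all_reals all_analysis.
From mathcomp Require Import ring lra.
Import Order.TTheory GRing.Theory Num.Theory.
Import numFieldNormedType.Exports.
Local Open Scope ring_scope.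
Local Open Scope classical_set_scope.
Set Implicit Arguments. Unset Strict Implicit.

(* C_{G(lam)} is the polar cone of the normals (-lam, beta), beta in G(lam).  It
   is convex, and (xb, yb) lies strictly inside it since
   -lam.xb + beta.yb <= -|xb| + |yb| < 0 uniformly in the unit vector beta.
   It is S-free because every (x, y) in S_{<=0} admits some beta in G(lam) with
   lam.x <= beta.y, i.e. two spherical caps {beta.y >= lam.x} and
   {d.beta <= -a.lam} meet; the constraint a.x + d.y <= 0, split along lam and
   its orthogonal complement, turns this into a planar trigonometric inequality.
   It is maximal because if a convex C' containing it also contains a point p
   cut off by the inequality of some beta0, then for a suitable s >= 0 the
   point s (lam, beta0) - p is interior to C, so the midpoint
   s/2 (lam, beta0), which lies in S_{<=0}, is interior to C'. *)

(* With t = cos psi, V = sin psi, (c, w) = D (cos phi, sin phi) and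
   (al, ta) = D (cos chi, sin chi) for angles in [0, pi], the hypotheses say
   |chi - psi| <= phi and psi + phi <= pi, whence cos (psi + phi) <= cos chi. *)
Lemma cos_add_le (R : realFieldType) (t V c w al ta D : R) :
  t ^+ 2 + V ^+ 2 = 1 -> c ^+ 2 + w ^+ 2 = D ^+ 2 -> al ^+ 2 + ta ^+ 2 = D ^+ 2 ->
  0 <= V -> 0 <= w -> 0 <= ta -> 0 <= D ->
  c <= al * t + ta * V -> 0 <= t * D + c -> t * c - V * w <= al.
Proof.
move=> htV hcw hat V0 w0 ta0 D0 hc htc.
have [tcal|altc] := lerP (t * c) al; first by have := mulr_ge0 V0 w0; lra.
have [cal|alc] := lerP (al * t) c.
  have sq : (c - al * t) ^+ 2 <= (ta * V) ^+ 2.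
    by rewrite ler_sqr ?nnegrE ?mulr_ge0 //; lra.
  have : (t * c - al) ^+ 2 <= (V * w) ^+ 2 by nra.
  by rewrite ler_sqr ?nnegrE ?mulr_ge0 //; lra.
have t0 : 0 < t.
  rewrite ltNge; apply/negP => t0.
  have alD : `|al| <= D.
    by rewrite -(ger0_norm D0) -ler_sqr ?nnegrE // !real_normK ?num_real //; nra.
  have : al * t <= `|al| * - t.
    by rewrite -(ler0_norm t0) -normrM real_ler_norm ?num_real.
  have : `|al| * - t <= D * - t by rewrite ler_wpM2r // oppr_ge0.
  lra.
have h0 : 0 <= V * c + t * w.
  have [c0|c0] := lerP 0 c; first by nra.
  have : D * V <= w by rewrite -ler_sqr ?nnegrE ?mulr_ge0 //; nra.
  nra.
have : t * (t * c - V * w) < t * al.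
  have -> : t * (t * c - V * w) = c * (t ^+ 2 + V ^+ 2) - V * (V * c + t * w).
    by ring.
  rewrite htV mulr1.
  have := mulr_ge0 V0 h0; nra.
by rewrite ltr_pM2l // => /ltW.
Qed.

Section InnerProduct.
Variables (R : realType) (n : nat).
Implicit Types (u v w : 'rV[R]_n) (k : R).

Lemma dotvC u v : dotv u v = dotv v u.
Proof. by apply: eq_bigr => i _; rewrite mulrC. Qed.

Lemma dotvDl u v w : dotv (u + v) w = dotv u w + dotv v w.
Proof. by rewrite /dotv -big_split; apply: eq_bigr => i _; rewrite mxE mulrDl. Qed.

Lemma dotvZl k u v : dotv (k *: u) v = k * dotv u v.
Proof. by rewrite /dotv mulr_sumr; apply: eq_bigr => i _; rewrite mxE mulrA. Qed.

Lemma dotvNl u v : dotv (- u) v = - dotv u v.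
Proof. by rewrite -scaleN1r dotvZl mulN1r. Qed.

Lemma dotvBl u v w : dotv (u - v) w = dotv u w - dotv v w.
Proof. by rewrite dotvDl dotvNl. Qed.

Lemma dotvDr u v w : dotv u (v + w) = dotv u v + dotv u w.
Proof. by rewrite dotvC dotvDl !(dotvC u). Qed.

Lemma dotvZr k u v : dotv u (k *: v) = k * dotv u v.
Proof. by rewrite dotvC dotvZl dotvC. Qed.

Lemma dotvNr u v : dotv u (- v) = - dotv u v.
Proof. by rewrite dotvC dotvNl dotvC. Qed.

Lemma dotvBr u v w : dotv u (v - w) = dotv u v - dotv u w.
Proof. by rewrite dotvDr dotvNr. Qed.

Definition dotvE := (dotvDl, dotvDr, dotvBl, dotvBr, dotvZl, dotvZr, dotvNl, dotvNr).

Lemma dotv0l u : dotv 0 u = 0.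
Proof. by rewrite -(scale0r 0) dotvZl mul0r. Qed.

Lemma dotvv_ge0 u : 0 <= dotv u u.
Proof. by apply: sumr_ge0 => i _; rewrite -expr2 sqr_ge0. Qed.

Lemma dotvv_eq0 u : (dotv u u == 0) = (u == 0).
Proof.
apply/idP/eqP => [|->]; last by rewrite dotv0l.
move/eqP/psumr_eq0P => u0; apply/rowP => i; rewrite mxE.
by apply/eqP; rewrite -sqrf_eq0 expr2 u0 // => j _; rewrite -expr2 sqr_ge0.
Qed.

Lemma enorm_ge0 u : 0 <= enorm u.
Proof. exact: sqrtr_ge0. Qed.

Lemma sqr_enorm u : enorm u ^+ 2 = dotv u u.
Proof. by rewrite sqr_sqrtr // dotvv_ge0. Qed.

Lemma enorm_gt0 u : (0 < enorm u) = (u != 0).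
Proof. by rewrite sqrtr_gt0 lt_def dotvv_eq0 dotvv_ge0 andbT. Qed.

Lemma enormZ k u : enorm (k *: u) = `|k| * enorm u.
Proof. by rewrite /enorm dotvZl dotvZr mulrA -expr2 sqrtrM ?sqr_ge0 // sqrtr_sqr. Qed.

Lemma enormN u : enorm (- u) = enorm u.
Proof. by rewrite -scaleN1r enormZ normrN1 mul1r. Qed.

Lemma enorm_normalize u : u != 0 -> enorm ((enorm u)^-1 *: u) = 1.
Proof.
by rewrite -enorm_gt0 => u0; rewrite enormZ ger0_norm ?invr_ge0 ?mulVf ?gt_eqF ?ltW.
Qed.

Lemma CauchySchwarz_dotv u v : `|dotv u v| <= enorm u * enorm v.
Proof.
wlog suff CS : u / dotv u v <= enorm u * enorm v.
  by rewrite ler_norml CS -(enormN u) -lerN2 opprK -dotvNl CS.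
have [->|u0] := eqVneq u 0; first by rewrite dotv0l mulr_ge0 ?enorm_ge0.
have [->|v0] := eqVneq v 0; first by rewrite dotvC dotv0l mulr_ge0 ?enorm_ge0.
have := dotvv_ge0 (enorm v *: u - enorm u *: v).
rewrite !dotvE (dotvC v u) -!sqr_enorm.
rewrite -enorm_gt0 in u0; rewrite -enorm_gt0 in v0.
have := mulr_gt0 u0 v0; nra.
Qed.

Lemma normr_entry_le_enorm u i : `|u ord0 i| <= enorm u.
Proof.
rewrite -sqrtr_sqr ler_sqrt ?dotvv_ge0 // /dotv (bigD1 i) //= expr2 lerDl.
by apply: sumr_ge0 => j _; rewrite -expr2 sqr_ge0.
Qed.

Lemma normr_dotv_le_sup u v : `|dotv u v| <= n%:R * enorm u * `|v|.
Proof.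
apply: le_trans (ler_norm_sum _ _ _) _.
rewrite -mulrA mulr_natl -[n in _ *+ n]card_ord -sumr_const; apply: ler_sum => i _.
rewrite normrM ler_pM ?normr_ge0 ?normr_entry_le_enorm //.
rewrite [leRHS]/Num.Def.normr /= mx_normrE.
by apply: le_trans; last exact: (le_bigmax _ _ (ord0, i)).
Qed.

Lemma dotv_orth_proj l u v : enorm l = 1 ->
  dotv (u - dotv u l *: l) (v - dotv v l *: l) = dotv u v - dotv u l * dotv v l.
Proof.
by move=> l1; rewrite !dotvE -sqr_enorm l1 (dotvC v l); ring.
Qed.

Lemma dotv_delta i u : dotv (delta_mx ord0 i) u = u ord0 i.
Proof.
rewrite /dotv (bigD1 i) //= big1 => [|j ji]; first by rewrite mxE !eqxx mul1r addr0.
by rewrite mxE (negbTE ji) andbF mul0r.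
Qed.

Lemma exists_unit_orthogonal u : (1 < n)%N ->
  exists e, enorm e = 1 /\ dotv e u = 0.
Proof.
move=> n1; pose i0 : 'I_n := Ordinal (ltnW n1); pose i1 : 'I_n := Ordinal n1.
have dd (i j : 'I_n) : dotv (delta_mx ord0 i : 'rV[R]_n) (delta_mx ord0 j) = (i == j)%:R.
  by rewrite dotv_delta mxE eqxx.
pose e : 'rV[R]_n := u ord0 i1 *: delta_mx ord0 i0 - u ord0 i0 *: delta_mx ord0 i1.
have eu : dotv e u = 0 by rewrite /e !dotvE !dotv_delta; ring.
have [e0|e0] := eqVneq e 0; last first.
  by exists ((enorm e)^-1 *: e); rewrite enorm_normalize // dotvZl eu mulr0.
have : dotv e e = u ord0 i1 ^+ 2 + u ord0 i0 ^+ 2.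
  by rewrite /e !dotvE !dd !eqxx [i1 == i0]eq_sym (_ : (i0 == i1) = false) //=; ring.
rewrite e0 dotv0l => /esym/eqP; rewrite paddr_eq0 ?sqr_ge0 // !sqrf_eq0.
case/andP => _ /eqP ui0; exists (delta_mx ord0 i0); split; last by rewrite dotv_delta.
by rewrite /enorm dd eqxx sqrtr1.
Qed.

Lemma exists_unit_orth_opposite u v : (1 < n)%N -> dotv u v = 0 ->
  exists e, [/\ enorm e = 1, dotv e u = 0 & dotv v e = - enorm v].
Proof.
move=> n1 uv; have [->|v0] := eqVneq v 0.
  have [e [e1 eu]] := exists_unit_orthogonal u n1.
  by exists e; rewrite dotv0l /enorm dotv0l sqrtr0 oppr0.
have vpos : 0 < enorm v by rewrite enorm_gt0.
exists (- ((enorm v)^-1 *: v)); split.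
- by rewrite enormN enorm_normalize.
- by rewrite dotvNl dotvZl dotvC uv mulr0 oppr0.
- by rewrite dotvNr dotvZr -sqr_enorm expr2 mulKf ?gt_eqF.
Qed.

End InnerProduct.

Section SphericalCaps.
Variables (R : realType) (n : nat).
Hypothesis n1 : (1 < n)%N.
Implicit Types (u d y : 'rV[R]_n) (t s al : R).

Lemma caps_meet_unit u d t al :
  enorm u = 1 -> `|t| <= 1 -> `|al| <= enorm d ->
  dotv d u <= al * t + Num.sqrt (enorm d ^+ 2 - al ^+ 2) * Num.sqrt (1 - t ^+ 2) ->
  exists beta, [/\ enorm beta = 1, dotv d beta <= al & t <= dotv beta u].
Proof.
move=> u1 t1 alD hdu; set D := enorm d in alD hdu *; set c := dotv d u in hdu.
have cD : `|c| <= D by have := CauchySchwarz_dotv d u; rewrite u1 mulr1.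
(* Either -d/|d| lies in both caps, or so does the point at height t above u
   on the great circle through u and the unit vector e orthogonal to u that
   minimises d.e. *)
have [tDc|ctD] := ltrP (t * D + c) 0.
  have D0 : 0 < D.
    rewrite lt_def enorm_ge0 andbT; apply/eqP => D0.
    by move: cD tDc; rewrite D0 normr_le0 => /eqP ->; rewrite mulr0 addr0 ltxx.
  exists (- ((enorm d)^-1 *: d)); split.
  - by rewrite enormN enorm_normalize // -enorm_gt0.
  - rewrite dotvNr dotvZr -sqr_enorm expr2 mulKf ?gt_eqF //.
    by move: alD; rewrite ler_norml => /andP [].
  - by rewrite dotvNl dotvZl mulrC -mulNr ler_pdivlMr -/D -/c //; lra.
set dp := d - c *: u.
have udp : dotv u dp = 0.
  by rewrite /dp dotvBr dotvZr -sqr_enorm u1 (dotvC u d) -/c; ring.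
have [e [e1 eu dpe]] := exists_unit_orth_opposite n1 udp.
set w := enorm dp in dpe.
have cw : c ^+ 2 + w ^+ 2 = D ^+ 2.
  by rewrite sqr_enorm dotv_orth_proj // sqr_enorm -/c; ring.
have de : dotv d e = - w.
  by rewrite -[d](subrK (c *: u)) dotvDl dotvZl -/dp dpe (dotvC u) eu; ring.
have t2 : 0 <= 1 - t ^+ 2.
  by rewrite subr_ge0 -real_normK ?num_real // expr_le1 ?normr_ge0.
have al2 : 0 <= D ^+ 2 - al ^+ 2.
  by rewrite subr_ge0 -real_normK ?num_real // ler_sqr ?nnegrE ?enorm_ge0.
set V := Num.sqrt (1 - t ^+ 2) in hdu *.
set ta := Num.sqrt (D ^+ 2 - al ^+ 2) in hdu.
have tV : t ^+ 2 + V ^+ 2 = 1 by rewrite sqr_sqrtr //; ring.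
have alta : al ^+ 2 + ta ^+ 2 = D ^+ 2 by rewrite sqr_sqrtr //; ring.
exists (t *: u + V *: e); split.
- rewrite /enorm !dotvE -!sqr_enorm u1 e1 (dotvC u) eu -[RHS]sqrtr1; congr Num.sqrt.
  by rewrite expr1n !mulr1 !mulr0 !addr0 add0r -!expr2.
- rewrite !dotvE -/c de mulrN.
  by apply: cos_add_le tV cw alta _ _ _ _ hdu _; rewrite ?sqrtr_ge0 ?enorm_ge0.
- by rewrite !dotvE -sqr_enorm u1 eu expr1n mulr1 mulr0 addr0.
Qed.

Lemma caps_meet y d s al :
  `|s| <= enorm y -> `|al| <= enorm d ->
  dotv d y <= al * s + Num.sqrt (enorm d ^+ 2 - al ^+ 2) * Num.sqrt (enorm y ^+ 2 - s ^+ 2) ->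
  exists beta, [/\ enorm beta = 1, dotv d beta <= al & s <= dotv beta y].
Proof.
move=> sY alD hdy; have [y0|y0] := eqVneq y 0.
  have [e [e1 _ de]] := exists_unit_orth_opposite n1 (dotv0l d).
  exists e; split => //; first by move: alD; rewrite de ler_norml => /andP [].
  by move: sY; rewrite y0 dotvC dotv0l /enorm dotv0l sqrtr0 normr_le0 => /eqP ->.
have Ypos : 0 < enorm y by rewrite enorm_gt0.
set Y := enorm y in sY hdy Ypos; set ta := Num.sqrt _ in hdy.
have sY1 : `|s / Y| <= 1 by rewrite normrM normfV (gtr0_norm Ypos) ler_pdivrMr ?mul1r.
have hdu : dotv d (Y^-1 *: y) <= al * (s / Y) + ta * Num.sqrt (1 - (s / Y) ^+ 2).
  have YV : Num.sqrt (Y ^+ 2 - s ^+ 2) = Y * Num.sqrt (1 - (s / Y) ^+ 2).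
    rewrite (_ : _ - _ = Y ^+ 2 * (1 - (s / Y) ^+ 2)); last by field; rewrite gt_eqF.
    by rewrite sqrtrM ?sqr_ge0 // sqrtr_sqr gtr0_norm.
  rewrite dotvZr ler_pdivrMl // (_ : Y * _ = al * s + ta * Num.sqrt (Y ^+ 2 - s ^+ 2)) //.
  by rewrite YV; field; rewrite gt_eqF.
have [beta [b1 db sb]] := caps_meet_unit (enorm_normalize y0) sY1 alD hdu.
exists beta; split => //.
by move: sb; rewrite dotvZr [_^-1 * _]mulrC ler_pM2r ?invr_gt0.
Qed.

End SphericalCaps.

Section PolarCone.
Variables (R : realType) (k : nat).
Implicit Types (A : set 'rV[R]_k) (N : set 'rV[R]_k) (p q w z : 'rV[R]_k).

Lemma interiorP A z :
  interior A z <-> exists2 r : R, 0 < r & forall w, `|z - w| < r -> A w.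
Proof.
rewrite /interior; split => [/nbhs_ballP [r r0 zA]|[r r0 zA]].
  by exists r => // w zw; apply: zA; rewrite -ball_normE.
by apply/nbhs_ballP; exists r => // w; rewrite -ball_normE => /zA.
Qed.

(* The unqualified [convex_set] would be MathComp-Analysis' notion. *)
Lemma interior_convex_comb A p q t : Defs.convex_set A -> A p -> interior A q ->
  0 < t -> t <= 1 -> interior A (t *: q + (1 - t) *: p).
Proof.
move=> cA Ap /interiorP [r r0 qA] t0 t1; apply/interiorP.
exists (t * r) => [|w zw]; first exact: mulr_gt0.
set q' := t^-1 *: (w - (1 - t) *: p).
have -> : w = t *: q' + (1 - t) *: p by rewrite scalerA mulfV ?gt_eqF // scale1r subrK.
apply: (cA q' p t) => //; [apply: qA | exact: ltW].
have -> : q - q' = t^-1 *: (t *: q + (1 - t) *: p - w).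
  by apply/rowP => i; rewrite !mxE; field; rewrite gt_eqF.
by rewrite normrZ gtr0_norm ?invr_gt0 // mulrC ltr_pdivrMr // mulrC.
Qed.

Definition polar N := [set z | forall w, N w -> dotv w z <= 0].

Lemma convex_polar N : Defs.convex_set (polar N).
Proof.
move=> p q t Np Nq t0 t1 w Nw; rewrite !dotvE.
by have := Np w Nw; have := Nq w Nw; nra.
Qed.

Lemma interior_polar N K eps z : 0 <= K -> 0 < eps ->
  (forall w, N w -> enorm w <= K) -> (forall w, N w -> dotv w z <= - eps) ->
  interior (polar N) z.
Proof.
move=> K0 eps0 NK Nz; have kK : 0 < k%:R * K + 1 by have := mulr_ge0 (ler0n R k) K0; lra.
apply/interiorP; exists (eps / (k%:R * K + 1)) => [|q zq w Nw]; first exact: divr_gt0.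
have -> : dotv w q = dotv w z - dotv w (z - q) by rewrite dotvBr; ring.
have := normr_dotv_le_sup w (z - q); have := Nz w Nw.
suff : k%:R * enorm w * `|z - q| <= eps.
  by move=> h1 h2 /ler_normlP [h3 _]; lra.
rewrite ltr_pdivlMr // in zq.
have := ler_wpM2r (normr_ge0 (z - q)) (ler_wpM2l (ler0n R k) (NK w Nw)).
have := normr_ge0 (z - q); nra.
Qed.

Lemma not_interior_polar N w z : N w -> w != 0 -> 0 <= dotv w z ->
  ~ interior (polar N) z.
Proof.
move=> Nw w0 wz /interiorP [r r0 zN].
have w1 : 0 < `|w| + 1 by have := normr_ge0 w; lra.
have h0 : 0 < r / (`|w| + 1) by exact: divr_gt0.
have : dotv w (z + r / (`|w| + 1) *: w) <= 0.
  apply: (zN _ _ w Nw); rewrite opprD addNKr normrN normrZ gtr0_norm //.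
  by rewrite mulrAC ltr_pdivrMr //; nra.
have := enorm_gt0 w; rewrite w0 => /(exprn_gt0 2); rewrite sqr_enorm.
rewrite dotvDr dotvZr; nra.
Qed.

End PolarCone.

Lemma dotv_row_mx (R : realType) (n m : nat) (u : 'rV[R]_n) (v : 'rV[R]_m) z :
  dotv (row_mx u v) z = dotv u (lsubmx z) + dotv v (rsubmx z).
Proof.
by rewrite /dotv big_split_ord; congr (_ + _); apply: eq_bigr => i _;
  rewrite ?row_mxEl ?row_mxEr mxE.
Qed.

Section FreeSet.
Variables (R : realType) (n m : nat) (a lam : 'rV[R]_n) (d : 'rV[R]_m).
Hypothesis lam1 : enorm lam = 1.

Definition S_le0 := [set z : 'rV[R]_(n + m) |
  enorm (lsubmx z) <= enorm (rsubmx z) /\ dotv a (lsubmx z) + dotv d (rsubmx z) <= 0].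

Definition G_lam := [set beta : 'rV[R]_m |
  enorm beta = 1 /\ dotv a lam + dotv d beta <= 0].

Definition C_G := [set z : 'rV[R]_(n + m) |
  forall beta, G_lam beta -> - dotv lam (lsubmx z) + dotv beta (rsubmx z) <= 0].

Let normal beta : 'rV[R]_(n + m) := row_mx (- lam) beta.

Lemma dotv_normal beta z :
  dotv (normal beta) z = - dotv lam (lsubmx z) + dotv beta (rsubmx z).
Proof. by rewrite dotv_row_mx dotvNl. Qed.

Lemma C_G_polar : C_G = polar (normal @` G_lam).
Proof.
apply/seteqP; split => z Cz; last by move=> beta Gb; rewrite -dotv_normal; apply: Cz; exists beta.
by move=> _ [beta Gb <-]; rewrite dotv_normal; apply: Cz.
Qed.

Lemma enorm_normal beta : enorm beta = 1 -> enorm (normal beta) = Num.sqrt 2.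
Proof.
move=> b1; rewrite /enorm dotv_row_mx row_mxKl row_mxKr dotvNl dotvNr opprK.
by rewrite -!sqr_enorm lam1 b1 expr1n.
Qed.

Lemma interior_C_G W eps : 0 < eps ->
  (forall beta, enorm beta = 1 -> dotv (normal beta) W <= - eps) -> interior C_G W.
Proof.
move=> eps0 hW; rewrite C_G_polar.
apply: (interior_polar (K := Num.sqrt 2)) (sqrtr_ge0 _) eps0 _ _ => _ [beta [b1 _] <-].
  by rewrite enorm_normal.
exact: hW.
Qed.

Lemma G_witness z : (1 < m)%N -> enorm a <= enorm d -> S_le0 z ->
  exists2 beta, G_lam beta & 0 <= dotv (normal beta) z.
Proof.
move=> m1 ad [xy axdy]; set x := lsubmx z in xy axdy *; set y := rsubmx z in xy axdy *.
set s := dotv lam x; set al := - dotv a lam.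
have sx : `|s| <= enorm y.
  by apply: le_trans (CauchySchwarz_dotv lam x) _; rewrite lam1 mul1r.
have ald : `|al| <= enorm d.
  by rewrite normrN; apply: le_trans (CauchySchwarz_dotv _ _) _; rewrite lam1 mulr1.
set ap := a - dotv a lam *: lam; set xp := x - dotv x lam *: lam.
have apxp : dotv ap xp = dotv a x + al * s by rewrite dotv_orth_proj // (dotvC x) /al /s; ring.
have sqr_le (u v : R) : `|u| <= v -> u ^+ 2 <= v ^+ 2.
  move=> uv; rewrite -real_normK ?num_real // ler_sqr ?nnegrE //.
  exact: le_trans (normr_ge0 u) uv.
have ap_le : enorm ap <= Num.sqrt (enorm d ^+ 2 - al ^+ 2).
  rewrite ler_sqrt ?subr_ge0 ?sqr_le // dotv_orth_proj // -sqr_enorm -expr2.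
  by rewrite -(sqrrN (dotv a lam)) lerD2r sqr_le // ger0_norm ?enorm_ge0.
have xp_le : enorm xp <= Num.sqrt (enorm y ^+ 2 - s ^+ 2).
  rewrite ler_sqrt ?subr_ge0 ?sqr_le // dotv_orth_proj // -sqr_enorm (dotvC x) -expr2.
  by rewrite lerD2r sqr_le // ger0_norm ?enorm_ge0.
have [beta [b1 db sb]] : exists beta, [/\ enorm beta = 1, dotv d beta <= al & s <= dotv beta y].
  apply: caps_meet => //; apply: le_trans (_ : - dotv a x <= _); first lra.
  have := ler_pM (enorm_ge0 ap) (enorm_ge0 xp) ap_le xp_le.
  have /ler_normlP [+ _] := CauchySchwarz_dotv ap xp.
  rewrite apxp; lra.
by exists beta; [split => //; rewrite /al in db; lra | rewrite dotv_normal -/x -/y -/s; lra].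
Qed.

Lemma C_G_S_free : (1 < m)%N -> enorm a <= enorm d -> S_free S_le0 C_G.
Proof.
move=> m1 ad; split; first by rewrite C_G_polar; exact: convex_polar.
apply/seteqP; split => // z [Iz Sz]; have [beta Gb bz] := G_witness m1 ad Sz.
apply: (not_interior_polar (N := normal @` G_lam) (w := normal beta)) bz _.
- by exists beta.
- by rewrite -enorm_gt0 enorm_normal ?sqrtr_gt0 //; case: Gb.
- by rewrite -C_G_polar.
Qed.

Lemma S_le0_ray beta t : G_lam beta -> 0 <= t -> S_le0 (t *: row_mx lam beta).
Proof.
move=> [b1 Gb] t0; rewrite /S_le0 /= scale_row_mx row_mxKl row_mxKr !enormZ lam1 b1.
by split => //; rewrite !dotvZr -mulrDr mulr_ge0_le0.
Qed.

Lemma C_G_maximal C' : S_free S_le0 C' -> C_G `<=` C' -> C' = C_G.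
Proof.
move=> [cC' IS] CC'; apply/seteqP; split => // p C'p; apply: contrapT => Cp.
have [beta0 G0 p0] : exists2 beta0, G_lam beta0 & 0 < dotv (normal beta0) p.
  apply: contrapT => nex; apply: Cp => beta Gb; rewrite -dotv_normal leNgt.
  by apply/negP => bp; apply: nex; exists beta.
have b01 : enorm beta0 = 1 by case: G0.
set dl := dotv (normal beta0) p in p0; set P := enorm (rsubmx p).
set sc := P ^+ 2 / dl; pose q := sc *: row_mx lam beta0 - p.
have Iq : interior C_G q.
  apply: (interior_C_G (eps := dl / 2)) => [|beta b1]; first exact: divr_gt0.
  have -> : dotv (normal beta) q = sc * (- 1 + dotv beta beta0) - dl - dotv (beta - beta0) (rsubmx p).
    rewrite /q /dl dotvBr dotvZr !dotv_normal row_mxKl row_mxKr -sqr_enorm lam1 dotvBl.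
    by rewrite expr1n; ring.
  set u := enorm (beta - beta0).
  have u2 : u ^+ 2 = 2 - 2 * dotv beta beta0.
    by rewrite sqr_enorm !dotvE -!sqr_enorm b1 b01 (dotvC beta0); ring.
  have /ler_normlP [+ _] := CauchySchwarz_dotv (beta - beta0) (rsubmx p); rewrite -/u -/P.
  have disc : 0 <= sc * u ^+ 2 - 2 * u * P + dl.
    rewrite -(pmulr_rge0 _ p0).
    have -> : dl * (sc * u ^+ 2 - 2 * u * P + dl) = (P * u - dl) ^+ 2.
      by rewrite /sc; field; rewrite gt_eqF.
    exact: sqr_ge0.
  have -> : sc * (-1 + dotv beta beta0) = - (sc * u ^+ 2) / 2 by rewrite u2; field.
  lra.
pose z := (sc / 2) *: row_mx lam beta0.
have Iz : interior C' z.
  have -> : z = (1 / 2) *: q + (1 - 1 / 2) *: p by apply/rowP => i; rewrite !mxE; field.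
  by apply: interior_convex_comb => //; [exact: interiorS Iq | lra].
have Sz : S_le0 z by apply: S_le0_ray; rewrite // !divr_ge0 ?sqr_ge0 ?ltW.
have : (interior C' `&` S_le0) z by split.
by rewrite IS.
Qed.

End FreeSet.

Unset Implicit Arguments.
Theorem proposition3 (R : realType) (n m : nat) (hn : (1 <= n)%N)
  (hm : (1 < m)%N) (a : 'rV[R]_n) (d : 'rV[R]_m)
  (had : enorm a <= enorm d) (xb : 'rV[R]_n) (yb : 'rV[R]_m) :
  let S := [set z : 'rV[R]_(n + m) |
             enorm (lsubmx z) <= enorm (rsubmx z) /\
             dotv a (lsubmx z) + dotv d (rsubmx z) <= 0] in
  ~ S (row_mx xb yb) ->
  dotv a xb + dotv d yb <= 0 ->
  let lam := (enorm xb)^-1 *: xb in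
  let G := [set beta : 'rV[R]_m |
             enorm beta = 1 /\ dotv a lam + dotv d beta <= 0] in
  let C := [set z : 'rV[R]_(n + m) |
             forall beta, G beta ->
               - dotv lam (lsubmx z) + dotv beta (rsubmx z) <= 0] in
  maximal_S_free S C /\ @interior 'rV[R]_(n + m) C (row_mx xb yb).
Proof.
move=> S notS axdy lam G C.
have yx : enorm yb < enorm xb.
  by rewrite ltNge; apply/negP => xy; apply: notS; rewrite /S /= row_mxKl row_mxKr; split.
have xb0 : xb != 0 by rewrite -enorm_gt0; apply: le_lt_trans yx; exact: enorm_ge0.
have lam1 : enorm lam = 1 by exact: enorm_normalize.
split; first by split; [exact: C_G_S_free | exact: C_G_maximal].
apply: (interior_C_G a d lam1 (eps := enorm xb - enorm yb)) => [|beta b1]; first lra.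
rewrite dotv_normal row_mxKl row_mxKr /lam dotvZl -sqr_enorm expr2 mulKf ?gt_eqF ?enorm_gt0 //.
have /ler_normlP [_] := CauchySchwarz_dotv beta yb; rewrite b1 mul1r; lra.
Qed.
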